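(* Let $T$ be a tree on $S$ and let $\{u,v\}$ be an edge of $T$ with at most one of $u,v$ labelled. If $\mathrm{md}(u,v)>0$, then the tree $T/\{u,v\}$ obtained by contracting this edge satisfies $\mathrm{MP}(T/\{u,v\})>\mathrm{MP}(T)$. Equivalently, if contracting $\{u,v\}$ does not increase the MP-cost, then $\mathrm{md}(u,v)=0$.
   Context: Fix integers $n\ge 2$ and $m\ge 1$, and finite nonempty sets $\Sigma_1,\dots,\Sigma_m$ (the states of characters $1,\dots,m$). A set of species $S=\{S_1,\dots,S_n\}$ is given, each species $S_j$ being an $m$-tuple $(s_{j,1},\dots,s_{j,m})\in\Sigma_1\times\cdots\times\Sigma_m$. A tree on $S$ is a finite unrooted tree (connected acyclic undirected graph) $T$ together with an injective map assigning each species $S_j$ to a node of $T$. Nodes receiving a species are called labelled, the others unlabelled. A fit of $T$ is a map $f$ assigning to every node $v$ a tuple $f(v)=(f(v)_1,\dots,f(v)_m)\in\Sigma_1\times\cdots\times\Sigma_m$ such that $f(v)=S_j$ whenever $v$ is labelled with $S_j$. The cost of $f$ is $\sum_{\{u,v\}\in E(T)} h(f(u),f(v))$, where $h$ is the Hamming distance. The MP-cost $\mathrm{MP}(T)$ is the minimum cost over all fits of $T$. A best fit is a fit of cost $\mathrm{MP}(T)$. Root sets: for a node $v$ and character $i$, $VV(v)_i=\{f(v)_i : f \text{ a best fit of } T\}\subseteq\Sigma_i$ (for a labelled node this is the singleton containing its species' $i$-th state). For adjacent nodes $u,v$, the min-cost is $\mathrm{md}(u,v)=|\{i\in\{1,\dots,m\}: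 VV(u)_i\cap VV(v)_i=\emptyset\}|$. Edge contraction: for an edge $\{u,v\}$ of $T$ with at most one of $u,v$ labelled, $T/\{u,v\}$ is obtained by replacing $u$ and $v$ by a single new node $w$ adjacent to every node that was adjacent to $u$ or to $v$ (other than $u,v$ themselves); $w$ carries the species of $u$ or $v$ if one of them is labelled, and is unlabelled otherwise. All other nodes, edges and labels are unchanged. *)

From mathcomp Require Import all_boot.
Set Implicit Arguments. Unset Strict Implicit. Unset Printing Implicit Defensive.

Section Parsimony.

Variables (n m : nat) (Sig : 'I_m -> finType).

Definition state := {dffun forall i : 'I_m, Sig i}.

Definition ham (x y : state) : nat := #|[pred i : 'I_m | x i != y i]|.

Variable S : 'I_n -> state.

Section Tree.
Variables (V : finType) (e : rel V) (lab : 'I_n -> V).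

Definition is_tree : Prop :=
  [/\ symmetric e, irreflexive e,
      (forall x y, connect e x y) &
      (forall (x : V) (p : seq V), path e x p -> uniq (x :: p) ->
          2 <= size p -> ~~ e (last x p) x)].

Definition fitT := {ffun V -> state}.

Definition is_fit (f : fitT) : bool := [forall j, f (lab j) == S j].

(* cost: sum over (unordered) edges, each edge counted once *)
Definition cost (f : fitT) : nat :=
  \sum_(x : V) \sum_(y : V | e x y && (enum_rank x < enum_rank y)) ham (f x) (f y).

Definition fit_cost_pred : pred nat :=
  fun c => [exists f : fitT, is_fit f && (cost f == c)].

Lemma fit_cost_ex : [exists f : fitT, is_fit f] -> exists c, fit_cost_pred c.
Proof.
case/existsP=> f hf; exists (cost f); apply/existsP; exists f.
by rewrite hf eqxx.
Qed.

(* MP-cost: the minimum cost over all fits (0 if there is no fit at all,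
   which cannot happen when the Sigma_i are nonempty). *)
Definition MP : nat :=
  match boolP [exists f : fitT, is_fit f] with
  | AltTrue h => ex_minn (fit_cost_ex h)
  | AltFalse _ => 0
  end.

Definition best_fit (f : fitT) : bool :=
  is_fit f && (cost f == MP).

Definition VV (x : V) (i : 'I_m) : {set Sig i} :=
  [set s | [exists f : fitT, best_fit f && (f x i == s)]].

Definition md (x y : V) : nat :=
  #|[set i : 'I_m | [disjoint VV x i & VV y i]]|.

(* Contraction of the edge {u,v}: new node type is
   option {x | x != u & x != v}, where None is the new node w. *)
Variables (u v : V).

Definition cnode := option {x : V | (x != u) && (x != v)}.

Definition cmap (x : V) : cnode := insub x.

Definition contr_rel : rel cnode :=
  fun a b => (a != b) &&
    [exists x : V, exists y : V, [&& e x y, cmap x == a & cmap y == b]].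

Definition contr_lab : 'I_n -> cnode := fun j => cmap (lab j).

End Tree.
End Parsimony.
Arguments contr_rel {V} e u v.
Arguments contr_lab {n V} lab u v.
Arguments cmap {V} u v x.

From mathcomp Require Import all_boot.
Set Implicit Arguments. Unset Strict Implicit. Unset Printing Implicit Defensive.

(* Pull a best fit g of T/{u,v} back to T by giving u and v both the state
   of the merged node. Every edge of T other than {u,v} is sent to an edge of
   T/{u,v}, injectively because a tree has no triangles, so the pulled-back
   fit costs at most MP(T/{u,v}); hence MP(T) <= MP(T/{u,v}). If equality
   held, the pulled-back fit would be a best fit of T agreeing on u and v, so
   VV(u)_i and VV(v)_i would meet for every character i, i.e. md(u,v) = 0. *)

Section Fits.
Variables (n m : nat) (Sig : 'I_m -> finType) (S : 'I_n -> state Sig).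
Variables (V : finType) (e : rel V) (lab : 'I_n -> V).

Lemma MP_le_cost (f : fitT Sig V) : is_fit S lab f -> MP S e lab <= cost e f.
Proof.
move=> fit_f; rewrite /MP; case: {-}_ / boolP => [fits|] //.
by case: ex_minnP => c _; apply; apply/existsP; exists f; rewrite fit_f eqxx.
Qed.

Lemma exists_best_fit :
  (exists f : fitT Sig V, is_fit S lab f) -> exists f, best_fit S e lab f.
Proof.
move=> [f0 fit_f0]; rewrite /best_fit /MP; case: {-}_ / boolP => [fits|].
  by case: ex_minnP => c /existsP [f /andP [fit_f cost_f]] _; exists f; rewrite fit_f.
by case/existsP; exists f0.
Qed.

Lemma md_eq0 (f : fitT Sig V) (x y : V) :
  best_fit S e lab f -> f x = f y -> md S e lab x y = 0.
Proof.
move=> best_f fxy; apply/eqP; rewrite cards_eq0; apply/eqP/setP => i.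
rewrite !inE; apply/negbTE/negP => /disjointFr disj.
have inVV z : f z i \in VV S e lab z i.
  by rewrite inE; apply/existsP; exists f; rewrite best_f eqxx.
by have := inVV y; rewrite -fxy disj ?inVV.
Qed.

Lemma exists_fit : injective lab -> (forall i, 0 < #|Sig i|) ->
  exists f : fitT Sig V, is_fit S lab f.
Proof.
move=> lab_inj /(_ _) /card_gt0P Sig0.
pose d : state Sig := [ffun i => xchoose (Sig0 i)].
exists [ffun x => if [pick j | lab j == x] is Some j then S j else d].
apply/forallP => j; rewrite ffunE; case: pickP => [k /eqP /lab_inj -> //|].
by move/(_ j); rewrite eqxx.
Qed.

End Fits.

Section Costs.
Variables (m : nat) (Sig : 'I_m -> finType).

Lemma hamC (x y : state Sig) : ham x y = ham y x.
Proof. by apply: eq_card => i; rewrite !inE eq_sym. Qed.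

Lemma hamxx (x : state Sig) : ham x x = 0.
Proof. by apply: eq_card0 => i; rewrite !inE eqxx. Qed.

Definition arc_cost (W : finType) (r : rel W) (f : fitT Sig W) : nat :=
  \sum_(p : W * W | r p.1 p.2) ham (f p.1) (f p.2).

Lemma double_cost (W : finType) (r : rel W) (f : fitT Sig W) :
  symmetric r -> irreflexive r -> (cost r f).*2 = arc_cost r f.
Proof.
move=> r_sym r_irr; rewrite /cost /arc_cost pair_big_dep /= -addnn.
rewrite [in RHS](bigID (fun p : W * W => enum_rank p.1 < enum_rank p.2)) /=.
congr (_ + _).
rewrite (reindex_inj (h := fun p : W * W => (p.2, p.1))) /=;
  last by move=> [? ?] [? ?] [-> ->].
apply: eq_big => [[x y]|[x y] _] /=; last by rewrite hamC.
rewrite r_sym -leqNgt; case: (boolP (r x y)) => //= rxy.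
have neq_xy : x != y by apply: contraTneq rxy => ->; rewrite r_irr.
by rewrite ltn_neqAle (inj_eq val_inj) (inj_eq enum_rank_inj) eq_sym neq_xy.
Qed.

End Costs.

Lemma tree_triangle_free (V : finType) (e : rel V) (x y z : V) :
  is_tree e -> e x y -> e y z -> ~~ e z x.
Proof.
case=> _ e_irr _ acyclic exy eyz; apply/negP => ezx.
have neq a b : e a b -> a != b by move=> eab; apply: contraTneq eab => ->; rewrite e_irr.
have := acyclic x [:: y; z]; rewrite /= exy eyz ezx !inE negb_or [x == z]eq_sym.
by rewrite !neq // => /(_ isT isT isT).
Qed.

Section Contraction.
Variables (n m : nat) (Sig : 'I_m -> finType) (S : 'I_n -> state Sig).
Variables (V : finType) (e : rel V) (lab : 'I_n -> V) (u v : V).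
Hypotheses (e_tree : is_tree e) (euv : e u v).

Local Notation cmap := (cmap u v).
Local Notation merged x := (x \in [:: u; v]).

Lemma cmap_eqNone x : (cmap x == None) = merged x.
Proof.
rewrite /cmap !inE; case: insubP => [s|] /=.
  by case: eqP => //= _; case: eqP.
by rewrite negb_and !negbK.
Qed.

Lemma eq_cmap x y : cmap x = cmap y -> x = y \/ merged x && merged y.
Proof.
rewrite /cmap !inE; case: insubP => [sx _ <-|nx]; case: insubP => [sy _ <-|ny] //=.
- by move=> [->]; left.
by move=> _; right; move: nx ny; rewrite !negb_and !negbK => -> ->.
Qed.

Lemma merged_neighbour_uniq z a b : merged a -> merged b -> e z a -> e z b -> a = b.
Proof.
have [e_sym _ _ _] := e_tree.
have no_uv w : e w u -> e w v -> False.
  by move=> ewu ewv; have := tree_triangle_free e_tree ewu euv; rewrite e_sym ewv.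
by rewrite !inE => /orP [] /eqP -> /orP [] /eqP -> // ? ?; case: (no_uv z).
Qed.

Lemma contr_rel_sym : symmetric (contr_rel e u v).
Proof.
have [e_sym _ _ _] := e_tree.
move=> a b; rewrite /contr_rel eq_sym; congr (_ && _).
apply/existsP/existsP => -[x /existsP [y /and3P [exy ha hb]]];
  by exists y; apply/existsP; exists x; rewrite e_sym exy ha hb.
Qed.

Lemma contr_rel_irr : irreflexive (contr_rel e u v).
Proof. by move=> a; rewrite /contr_rel eqxx. Qed.

Lemma cmap_arc_inj :
  {in [pred p : V * V | e p.1 p.2 && (cmap p.1 != cmap p.2)] &,
    injective (fun p => (cmap p.1, cmap p.2))}.
Proof.
have [e_sym _ _ _] := e_tree.
move=> [x y] [x' y'] /andP [/= exy nxy] /andP [/= + _] [] /eq_cmap hx /eq_cmap hy.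
case: hx hy => [<-|/andP [mx mx']] [<-|/andP [my my']] // exy'.
- by rewrite (merged_neighbour_uniq my my' exy exy').
- by rewrite (merged_neighbour_uniq (z := y) mx mx') // e_sym.
- by move: nxy; rewrite -!cmap_eqNone in mx my; rewrite (eqP mx) (eqP my).
Qed.

Definition pullback (g : fitT Sig (cnode u v)) : fitT Sig V :=
  [ffun x => g (cmap x)].

Lemma pullback_fit g : is_fit S (contr_lab lab u v) g -> is_fit S lab (pullback g).
Proof. by move=> /forallP fit_g; apply/forallP => j; rewrite ffunE fit_g. Qed.

Lemma pullback_merged g : pullback g u = pullback g v.
Proof.
have merged_None x : merged x -> cmap x = None by rewrite -cmap_eqNone => /eqP.
by rewrite !ffunE !merged_None // !inE eqxx ?orbT.
Qed.

Lemma arc_cost_pullback g :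
  arc_cost e (pullback g) <= arc_cost (contr_rel e u v) g.
Proof.
rewrite /arc_cost (bigID (fun p : V * V => cmap p.1 == cmap p.2)) /=.
rewrite big1 ?add0n; last by move=> p /andP [_ /eqP]; rewrite !ffunE => ->; rewrite hamxx.
rewrite (eq_bigr (fun p => ham (g (cmap p.1, cmap p.2).1) (g (cmap p.1, cmap p.2).2)));
  last by move=> p _; rewrite !ffunE.
rewrite -(big_imset (fun q => ham (g q.1) (g q.2)) cmap_arc_inj).
apply: (sub_le_big leqnn (fun a b => leq_addr b a)) => q /imsetP [[x y] /andP [/= exy nxy] ->].
rewrite /contr_rel /= nxy /=; apply/existsP; exists x; apply/existsP; exists y.
by rewrite exy !eqxx.
Qed.

Lemma cost_pullback g : cost e (pullback g) <= cost (contr_rel e u v) g.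
Proof.
have [e_sym e_irr _ _] := e_tree.
rewrite -leq_double !double_cost //; first exact: arc_cost_pullback.
- exact: contr_rel_sym.
- exact: contr_rel_irr.
Qed.

End Contraction.

Lemma contr_lab_inj (n : nat) (V : finType) (lab : 'I_n -> V) (u v : V) :
  injective lab -> ~~ ((u \in codom lab) && (v \in codom lab)) ->
  injective (contr_lab lab u v).
Proof.
move=> lab_inj unlabelled j k /eq_cmap [/lab_inj //|].
rewrite !inE => /andP [mj mk]; case: (eqVneq (lab j) (lab k)) => [/lab_inj //|neq].
case/negP: unlabelled; move: mj mk neq => /orP [] /eqP <- /orP [] /eqP <-;
  by rewrite ?eqxx // !codom_f.
Qed.

Theorem lemma6 (n m : nat) (Sig : 'I_m -> finType) (S : 'I_n -> state Sig)
  (V : finType) (e : rel V) (lab : 'I_n -> V) (u v : V) :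
  2 <= n -> 1 <= m -> (forall i : 'I_m, 0 < #|Sig i|) -> injective S ->
  is_tree e -> injective lab ->
  e u v -> ~~ ((u \in codom lab) && (v \in codom lab)) ->
  0 < md S e lab u v ->
  MP S e lab < MP S (contr_rel e u v) (contr_lab lab u v).
Proof.
move=> _ _ Sig_nonempty _ e_tree lab_inj euv unlabelled md_pos.
have [g /andP [fit_g /eqP cost_g]] := exists_best_fit (contr_rel e u v)
  (exists_fit S (contr_lab_inj lab_inj unlabelled) Sig_nonempty).
have fit_f := pullback_fit fit_g.
have cost_f : cost e (pullback g) <= MP S (contr_rel e u v) (contr_lab lab u v).
  by rewrite -cost_g (cost_pullback e_tree euv).
have MP_le := leq_trans (MP_le_cost e fit_f) cost_f.
rewrite ltn_neqAle MP_le andbT; apply: contraTneq md_pos => MP_eq.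
rewrite -leqNgt leqn0 (md_eq0 _ (pullback_merged g)) //.
by rewrite /best_fit fit_f eqn_leq MP_le_cost // MP_eq cost_f.
Qed.
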